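(* Let $\tilde q=q^2$. For all integers $v\geq 1$ and $L\geq 0$, \[ \sum_{n_1,\ldots,n_v\geq 0} \frac{\tilde q^{\sum_{i=1}^v N_i(N_i+1)+n_v}}{(\tilde q)_{n_1}\cdots(\tilde q)_{n_{v-1}}(\tilde q)_{2n_v+1}}\,\frac{(q^3;q^6)_{n_v}}{(q;q^2)_{n_v}}\,\frac{(\tilde q)_{2L+1}}{(\tilde q)_{L-N_1}} =\sum_{j=-\infty}^{\infty} (-1)^j q^{(2v+1)j^2+2vj-1}\left(\frac{j}{3}\right){2L+1 \brack L-j}_{\tilde q}, \] where $N_i=n_i+n_{i+1}+\cdots+n_v$ for $i=1,\ldots,v$ (for $v=1$ the product $(\tilde q)_{n_1}\cdots(\tilde q)_{n_{v-1}}$ is empty).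
   Context: For a variable $a$ and integer $n\ge 0$, $(a;q)_n=(1-a)(1-aq)\cdots(1-aq^{n-1})$, and $(\tilde q)_n=(\tilde q;\tilde q)_n$; by convention $1/(\tilde q)_n=0$ for negative integers $n$. The $q$-binomial coefficient in base $\tilde q$ is ${A \brack B}_{\tilde q}=\frac{(\tilde q;\tilde q)_A}{(\tilde q;\tilde q)_B(\tilde q;\tilde q)_{A-B}}$ if $0\le B\le A$ are integers, and $0$ otherwise. $\left(\frac{j}{3}\right)$ is the Legendre symbol modulo 3: it equals $1$ if $j\equiv 1 \pmod 3$, $-1$ if $j\equiv -1\pmod 3$, and $0$ if $3\mid j$. *)

From HB Require Import structures.
From mathcomp Require Import all_boot all_order all_algebra.
Set Implicit Arguments. Unset Strict Implicit. Unset Printing Implicit Defensive.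
Import Order.TTheory GRing.Theory Num.Theory.
Local Open Scope ring_scope.

Definition qpoch (R : ringType) (a q : R) (n : nat) : R :=
  \prod_(i < n) (1 - a * q ^+ i).

Definition qfac (R : ringType) (qt : R) (n : nat) : R := qpoch qt qt n.

(* 1/(qt)_n, with the convention 1/(qt)_n = 0 for negative n *)
Definition inv_qfac (R : unitRingType) (qt : R) (n : int) : R :=
  match n with Posz m => (qfac qt m)^-1 | Negz _ => 0 end.

Definition qbinom (R : unitRingType) (qt : R) (A B : int) : R :=
  match A, B with
  | Posz a, Posz b =>
      if (b <= a)%N then qfac qt a / (qfac qt b * qfac qt (a - b)) else 0
  | _, _ => 0
  end.

Definition leg3 (R : ringType) (j : int) : R :=
  if (j %% 3)%Z == 1 then 1 else if (j %% 3)%Z == 2 then -1 else 0.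

(* extend a finite family n_0..n_(v-1) (0-indexed) to nat -> nat by zero *)
Definition ext (v L : nat) (f : {ffun 'I_v -> 'I_L.+1}) (k : nat) : nat :=
  match insub k with Some i => nat_of_ord (f i) | None => 0%N end.

(* N_(i+1) = n_(i+1) + ... + n_v  (0-indexed: sum over i <= k < v) *)
Definition Nsum (v : nat) (n : nat -> nat) (i : nat) : nat :=
  (\sum_(i <= k < v) n k)%N.

(* summand of the left-hand side; n_v is n (v-1) *)
Definition lhs_term (R : unitRingType) (q : R) (v L : nat) (n : nat -> nat) : R :=
  let qt := q ^+ 2 in
  let nv := n v.-1 in
  qt ^+ ((\sum_(i < v) Nsum v n i * (Nsum v n i).+1) + nv)%N
  / ((\prod_(i < v.-1) qfac qt (n i)) * qfac qt (2 * nv + 1))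
  * (qpoch (q ^+ 3) (q ^+ 6) nv / qpoch q (q ^+ 2) nv)
  * (qfac qt (2 * L + 1) * inv_qfac qt (L%:Z - (Nsum v n 0)%:Z)).

Definition rhs_term (R : unitRingType) (q : R) (v L : nat) (j : int) : R :=
  (-1) ^ j * q ^ ((2 * v + 1)%:Z * j ^+ 2 + (2 * v)%:Z * j - 1)
  * leg3 R j * qbinom (q ^+ 2) (2 * L + 1)%:Z (L%:Z - j).

From HB Require Import structures.
From mathcomp Require Import all_boot all_order all_algebra.
From mathcomp Require Import ring zify.
From Stdlib Require Import FunctionalExtensionality.
Set Implicit Arguments. Unset Strict Implicit. Unset Printing Implicit Defensive.
Import Order.TTheory GRing.Theory Num.Theory.
Local Open Scope ring_scope.

(* The left-hand side is a Bailey chain of length v relative to a = q~ (where q~ = q^2).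
   The base Bailey pair is
     beta_m = q~^m (q^3;q^6)_m / ((q;q^2)_m (q~)_(2m+1)),
     alpha_r = c(r) + c(-r-1),   c(j) = (-1)^j (j/3) q^(j^2-1);
   after folding j -> -j-1 this says
     sum_j (-1)^j (j/3) q^(j^2) [2m+1, m-j] = q^(2m+1) prod_(i<m) (1 + q^(2i+1) + q^(4i+2)),
   which follows by induction on m from a three-term q-Pascal recurrence: the sequence
   e(j) = (-1)^j (j/3) satisfies e(j+1) = e(j) - e(j-1), so its shifts span a two-dimensional
   space and the induction closes on two sums.  Bailey's lemma with both parameters sent to
   infinity, which rests on a q-Chu-Vandermonde sum, multiplies alpha_r by q~^(r^2+r); applying
   it v times and unfolding the nested beta's yields the multiple sum on the left, while the
   right-hand side is sum_j q^(2v(j^2+j)) c(j) [2L+1, L-j]. *)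

(** * Reindexing finite sums *)

Section IntWindowSum.
Variable V : nmodType.

Definition zsum (n : nat) (F : int -> V) : V := \sum_(i < n.*2) F (i%:Z - n%:Z).

Lemma zsum0 F : zsum 0 F = 0.
Proof. by rewrite /zsum big_ord0. Qed.

Lemma zsumS n F : zsum n.+1 F = F (- n.+1%:Z) + zsum n F + F n%:Z.
Proof.
rewrite /zsum doubleS big_ord_recl big_ord_recr /= addrA.
congr (F _ + _ + F _).
- by rewrite sub0r.
- by apply: eq_bigr => i _; congr F; rewrite /bump /=; lia.
- by rewrite /bump /= -!mul2n; lia.
Qed.

Lemma zsum_fold n F : zsum n F = \sum_(0 <= r < n) (F r%:Z + F (- r%:Z - 1)).
Proof.
elim: n => [|n IH]; first by rewrite zsum0 big_geq.
rewrite zsumS IH big_nat_recr //= (_ : - n.+1%:Z = - n%:Z - 1); last by lia.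
by rewrite addrAC [RHS]addrC [F n%:Z + _]addrC.
Qed.

Lemma zsum_shift n F : zsum n (fun j => F (j + 1)) + F (- n%:Z) = zsum n F + F n%:Z.
Proof.
elim: n => [|n IH]; first by rewrite !zsum0.
rewrite !zsumS (_ : - n.+1%:Z + 1 = - n%:Z); last by lia.
rewrite (_ : n%:Z + 1 = n.+1%:Z); last by lia.
by rewrite [F (- n%:Z) + _]addrC IH addrAC [_ + F (- _)]addrC !addrA.
Qed.

Lemma eq_zsum n F G : (forall j, F j = G j) -> zsum n F = zsum n G.
Proof. by move=> eqFG; apply: eq_bigr => i _; rewrite eqFG. Qed.

Lemma zsumD n F G : zsum n (fun j => F j + G j) = zsum n F + zsum n G.
Proof. exact: big_split. Qed.

Lemma zsum_shift_out n F :
  F (- n%:Z) = 0 -> F n%:Z = 0 -> zsum n (fun j => F (j + 1)) = zsum n F.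
Proof. by move=> Fl Fr; have := zsum_shift n F; rewrite Fl Fr !addr0. Qed.

End IntWindowSum.

Lemma mulr_zsumr (R : pzSemiRingType) n a (F : int -> R) :
  a * zsum n F = zsum n (fun j => a * F j).
Proof. exact: mulr_sumr. Qed.

Lemma sum_triangle (V : nmodType) n (F : nat -> nat -> V) :
  \sum_(0 <= m < n.+1) \sum_(0 <= r < m.+1) F m r
  = \sum_(0 <= r < n.+1) \sum_(0 <= k < (n - r).+1) F (r + k)%N r.
Proof.
transitivity (\sum_(0 <= m < n.+1) \sum_(0 <= r < n.+1 | (r < m.+1)%N) F m r).
  by apply: eq_big_nat => m /andP[_ m_le_n]; rewrite (big_nat_widen _ _ _ _ _ m_le_n).
rewrite (exchange_big_dep_nat xpredT) //=; apply: eq_big_nat => r /andP[_ r_le_n].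
rewrite (eq_bigl (fun i => xpredT i && (r <= i)%N)) // -(big_nat_widenl r 0 n.+1 xpredT) //.
by rewrite -{1}(add0n r) big_addn subSn //; apply: eq_bigr => k _; rewrite addnC.
Qed.

Lemma sum_window (V : nmodType) (G : nat -> V) a M K :
  (forall m, (m < a)%N -> G m = 0) -> (forall m, (M < m)%N -> G m = 0) -> (M <= K)%N ->
  \sum_(x < K.+1) G (x + a)%N = \sum_(0 <= m < M.+1) G m.
Proof.
move=> G_low G_high M_le_K.
have -> : \sum_(x < K.+1) G (x + a)%N = \sum_(a <= m < K.+1 + a) G m.
  by rewrite -{2}(add0n a) big_addn addnK big_mkord.
have low0 : \sum_(0 <= m < a) G m = 0.
  by rewrite big_nat_cond big1 // => m /andP[/andP[_ /G_low]].
have high0 : \sum_(M.+1 <= m < K.+1 + a) G m = 0.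
  by rewrite big_nat_cond big1 // => m /andP[/andP[/G_high]].
rewrite -[LHS]add0r -[X in X + _]low0 -big_cat_nat ?leq_addl // (big_cat_nat (leq0n M.+1)).
  by rewrite high0 /= addr0.
by rewrite ltnS (leq_trans M_le_K) ?leq_addr.
Qed.

(** * q-binomial coefficients and Bailey's lemma *)

Section QBinomial.
Variables (R : fieldType) (t : R).
Hypothesis t_nonroot : forall k, (0 < k)%N -> t ^+ k != 1.

Local Notation qf := (qfac t).
Local Notation qb n k := (qbinom t n%:Z k).

Lemma qpochS a n : qpoch a t n.+1 = qpoch a t n * (1 - a * t ^+ n).
Proof. by rewrite /qpoch big_ord_recr. Qed.

Lemma qfac0 : qf 0 = 1.
Proof. by rewrite /qfac /qpoch big_ord0. Qed.

Lemma qfacS n : qf n.+1 = qf n * (1 - t ^+ n.+1).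
Proof. by rewrite /qfac qpochS -exprS. Qed.

Lemma qfacD a b : qf (a + b) = qf a * qpoch (t ^+ a.+1) t b.
Proof.
elim: b => [|b IH]; first by rewrite addn0 /qpoch big_ord0 mulr1.
by rewrite addnS qfacS IH qpochS mulrA -exprD addSn.
Qed.

Lemma one_sub_expr_neq0 k : (0 < k)%N -> 1 - t ^+ k != 0.
Proof. by move=> k_gt0; rewrite subr_eq0 eq_sym t_nonroot. Qed.

Lemma qfac_neq0 n : qf n != 0.
Proof.
elim: n => [|n IH]; first by rewrite qfac0 oner_neq0.
by rewrite qfacS mulf_neq0 // one_sub_expr_neq0.
Qed.

Lemma qbinom_nat n k : (k <= n)%N -> qb n k%:Z = qf n / (qf k * qf (n - k)).
Proof. by rewrite /qbinom => ->. Qed.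

Lemma qbinom_out n z : (z < 0) || (n%:Z < z) -> qb n z = 0.
Proof. by case: z => [k|//] /orP[//|]; rewrite ltz_nat /qbinom => /ltn_geF ->. Qed.

Lemma qbinom0 n : qb n 0 = 1.
Proof. by rewrite qbinom_nat // qfac0 subn0 mul1r divff ?qfac_neq0. Qed.

Lemma qbinomnn n : qb n n%:Z = 1.
Proof. by rewrite qbinom_nat // subnn qfac0 mulr1 divff ?qfac_neq0. Qed.

Lemma qbinom_sym n z : qb n (n%:Z - z) = qb n z.
Proof.
case: z => [k|k]; last by rewrite !qbinom_out //; lia.
have [k_le_n | n_lt_k] := leqP k n; last by rewrite !qbinom_out //; lia.
rewrite (_ : n%:Z - k%:Z = (n - k)%N%:Z); last by lia.
by rewrite !qbinom_nat ?leq_subr // subKn // [qf (n - k) * _]mulrC.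
Qed.

Lemma qbinomS_nat n k : (k <= n)%N -> qb n.+1 k.+1 = qb n k.+1 + t ^+ (n - k) * qb n k.
Proof.
rewrite leq_eqVlt => /predU1P[-> | k_lt_n].
  by rewrite subnn !qbinomnn (@qbinom_out n n.+1) ?add0r ?mulr1 //; lia.
have [d ->] : exists d, n = (k.+1 + d)%N by exists (n - k.+1)%N; rewrite subnKC.
rewrite !qbinom_nat; [|lia..].
rewrite (_ : ((k.+1 + d).+1 - k.+1 = d.+1)%N); last by lia.
rewrite (_ : (k.+1 + d - k.+1 = d)%N); last by lia.
rewrite (_ : (k.+1 + d - k = d.+1)%N); last by lia.
rewrite [qf (_ + d).+1]qfacS [qf d.+1]qfacS [qf k.+1]qfacS -addnS exprD.
have := one_sub_expr_neq0 (ltn0Sn k); have := one_sub_expr_neq0 (ltn0Sn d).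
have := qfac_neq0 k; have := qfac_neq0 d.
move: (qf k) (qf d) (qf (k.+1 + d)) (t ^+ k.+1) (t ^+ d.+1) => a b c x y b0 a0 y1 x1.
by field; rewrite a0 b0 x1 y1.
Qed.

Lemma qbinomS n z : qb n.+1 z = qb n z + t ^ (n.+1%:Z - z) * qb n (z - 1).
Proof.
case: z => [[|k]|k]; last by rewrite !qbinom_out ?mulr0 ?addr0.
- by rewrite !qbinom0 (@qbinom_out n (0 - 1)) ?mulr0 ?addr0.
have [k_le_n | n_lt_k] := leqP k n; last by rewrite !qbinom_out ?mulr0 ?addr0 //; lia.
rewrite (_ : k.+1%:Z - 1 = k%:Z); last by lia.
rewrite (_ : n.+1%:Z - k.+1%:Z = (n - k)%N%:Z); last by lia.
exact: qbinomS_nat.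
Qed.

Lemma qbinomS_dual n z : qb n.+1 z = t ^ z * qb n z + qb n (z - 1).
Proof.
rewrite -qbinom_sym qbinomS -[in RHS](qbinom_sym n z) -[qb n (z - 1)]qbinom_sym addrC.
by congr (t ^ _ * qb n _ + qb n _); lia.
Qed.

Lemma qbinomSS (t_neq0 : t != 0) n z :
  qb n.+2 z = t ^ z * qb n z + (1 + t ^+ n.+1) * qb n (z - 1) + t ^ (n.+2%:Z - z) * qb n (z - 2).
Proof.
rewrite qbinomS_dual qbinomS qbinomS mulrDr mulrA -expfzDr //.
rewrite (_ : z + (n.+1%:Z - z) = n.+1%:Z); last by lia.
rewrite (_ : z - 1 - 1 = z - 2); last by lia.
rewrite (_ : n.+1%:Z - (z - 1) = n.+2%:Z - z); last by lia.
rewrite -exprnP; ring.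
Qed.

Definition qchu_sum n c : R :=
  \sum_(0 <= k < n.+1) qb n k%:Z * t ^+ (k * k + c * k) * qpoch (t ^+ (c + k).+1) t (n - k).

Lemma qchu_sumS n c :
  qchu_sum n.+1 c = (1 - t ^+ (c + n).+1) * qchu_sum n c + t ^+ (c + n).+1 * qchu_sum n c.+1.
Proof.
rewrite /qchu_sum big_nat_recl // (_ : qb n.+1 0%N%:Z = qb n 0%N%:Z); last by rewrite !qbinom0.
under eq_big_nat => k /andP[_ k_le_n] do rewrite (@qbinomS_nat n k k_le_n) !mulrDl.
rewrite big_split addrA; congr (_ + _).
  rewrite -(big_nat_recl _ _ (fun k => qb n k%:Z * t ^+ (k * k + c * k)
                                         * qpoch (t ^+ (c + k).+1) t (n.+1 - k))) //.
  rewrite big_nat_recr // qbinom_out ?ltz_nat ?ltnSn ?orbT // !mul0r Monoid.mulm1 mulr_sumr.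
  apply: eq_big_nat => k /andP[_ k_le_n].
  rewrite subSn // qpochS -exprD (_ : ((c + k).+1 + (n - k) = (c + n).+1)%N); last by lia.
  ring.
rewrite mulr_sumr; apply: eq_big_nat => k /andP[_ k_le_n].
have -> : t ^+ (n - k) * qb n k%:Z * t ^+ (k.+1 * k.+1 + c * k.+1)
          = qb n k%:Z * (t ^+ (c + n).+1 * t ^+ (k * k + c.+1 * k)).
  by rewrite -!exprD mulrAC mulrC -exprD; congr (_ * t ^+ _); lia.
by rewrite subSS addnS -addSn; ring.
Qed.

Lemma qchu_sum_eq1 n c : qchu_sum n c = 1.
Proof.
elim: n c => [|n IH] c; last by rewrite qchu_sumS !IH !mulr1 subrK.
by rewrite /qchu_sum big_nat1 qbinom0 subnn /qpoch big_ord0 mul0n muln0 mulr1 mul1r.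
Qed.

Lemma qchu_vandermonde n c :
  \sum_(0 <= k < n.+1) t ^+ (k * k + c * k) / (qf k * qf (n - k) * qf (c + k))
  = (qf n * qf (c + n))^-1.
Proof.
rewrite -[RHS]mulr1 -(qchu_sum_eq1 n c) mulr_sumr; apply: eq_big_nat => k /andP[_ k_le_n].
rewrite qbinom_nat // (_ : (c + n = c + k + (n - k))%N) ?[qf (c + k + _)]qfacD; last by lia.
move: (qfac_neq0 (c + k + (n - k))); rewrite qfacD mulf_eq0 negb_or => /andP[_ qpoch_neq0].
by field; rewrite qpoch_neq0 !qfac_neq0.
Qed.

(* Bailey pairs relative to a = t, normalised by (t)_(L+r+1) = (1 - t) (at;t)_(L+r). *)
Definition bailey_pair (al be : nat -> R) :=
  forall L, be L = \sum_(0 <= r < L.+1) al r / (qf (L - r) * qf (L + r).+1).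

Definition bailey_step (be : nat -> R) (L : nat) : R :=
  \sum_(0 <= m < L.+1) t ^+ (m * m + m) * be m / qf (L - m).

Lemma bailey_lemma al be : bailey_pair al be ->
  bailey_pair (fun r => t ^+ (r * r + r) * al r) (bailey_step be).
Proof.
move=> pair_ab L; rewrite /bailey_step.
under eq_bigr => m _ do rewrite pair_ab mulr_sumr mulr_suml.
rewrite sum_triangle; apply: eq_big_nat => r /andP[_ r_le_L].
have := qchu_vandermonde (L - r) (2 * r).+1.
rewrite (_ : ((2 * r).+1 + (L - r) = (L + r).+1)%N); last by lia.
move=> <-; rewrite mulr_sumr; apply: eq_big_nat => k /andP[_ k_le].
rewrite (_ : (r + k - r = k)%N); last by lia.
rewrite (_ : ((r + k) + r).+1 = ((2 * r).+1 + k))%N; last by lia.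
rewrite (_ : (L - (r + k) = L - r - k)%N); last by lia.
rewrite (_ : ((r + k) * (r + k) + (r + k) = (r * r + r) + (k * k + (2 * r).+1 * k))%N); last by lia.
rewrite exprD !invfM; ring.
Qed.

Lemma bailey_chain al be v : bailey_pair al be ->
  bailey_pair (fun r => t ^+ ((r * r + r) * v) * al r) (iter v bailey_step be).
Proof.
move=> pair_ab; elim: v => [|v IH] L.
  by rewrite /= pair_ab; apply: eq_bigr => r _; rewrite muln0 expr0 mul1r.
rewrite iterS (bailey_lemma IH); apply: eq_bigr => r _.
by rewrite mulnS (exprD _ (r * r + r)) mulrA.
Qed.

Lemma bailey_sum_zsum (c : int -> R) L :
  \sum_(0 <= r < L.+1) (c r%:Z + c (- r%:Z - 1)) / (qf (L - r) * qf (L + r).+1)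
  = zsum L.+1 (fun j => c j * qb (2 * L).+1 (L%:Z - j)) / qf (2 * L).+1.
Proof.
rewrite zsum_fold mulr_suml; apply: eq_big_nat => r /andP[_ r_le_L].
rewrite -[qb _ (L%:Z - (- r%:Z - 1))]qbinom_sym.
rewrite (_ : (2 * L).+1%:Z - (L%:Z - (- r%:Z - 1)) = (L - r)%N%:Z); last by lia.
rewrite (_ : L%:Z - r%:Z = (L - r)%N%:Z); last by lia.
rewrite qbinom_nat; last by lia.
rewrite (_ : ((2 * L).+1 - (L - r) = (L + r).+1)%N); last by lia.
by field; rewrite !qfac_neq0.
Qed.

End QBinomial.

(** * The base Bailey pair *)

Section BasePair.
Variables (R : fieldType) (q : R).
Hypothesis q_neq0 : q != 0.
Hypothesis q_nonroot : forall k, (0 < k)%N -> q ^+ k != 1.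

Local Notation t := (q ^+ 2).
Local Notation qb n k := (qbinom t n%:Z k).

Lemma sqr_neq0 : t != 0.
Proof. exact: expf_neq0. Qed.

Lemma sqr_nonroot k : (0 < k)%N -> t ^+ k != 1.
Proof. by move=> k_gt0; rewrite -exprM q_nonroot // muln_gt0. Qed.

Definition sleg3 (j : int) : R := (-1) ^ j * leg3 R j.

Lemma leg3_sum j : leg3 R (j - 1) + leg3 R j + leg3 R (j + 1) = 0.
Proof.
have : [|| (j %% 3)%Z == 0, (j %% 3)%Z == 1 | (j %% 3)%Z == 2] by lia.
rewrite /leg3 -(modzDml j (-1)) -(modzDml j 1).
by case/or3P => /eqP ->; rewrite /=; ring.
Qed.

Lemma sleg3_rec j : sleg3 (j + 1) = sleg3 j - sleg3 (j - 1).
Proof.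
have sgnS k : (-1 : R) ^ (k + 1) = - (-1) ^ k.
  by rewrite expfzDr ?oppr_eq0 ?oner_eq0 // expr1z mulrN1.
have sgnP : (-1 : R) ^ (j - 1) = - (-1) ^ j by rewrite -{2}(subrK 1 j) sgnS opprK.
have leg3S : leg3 R (j + 1) = - leg3 R (j - 1) - leg3 R j.
  by apply: (addrI (leg3 R (j - 1) + leg3 R j)); rewrite leg3_sum; ring.
by rewrite /sleg3 sgnS sgnP leg3S; ring.
Qed.

Definition kern (m : nat) (j : int) : R := q ^ (j * j) * qb (2 * m).+1 (m%:Z - j).

Lemma kern_out m j : (j < - m.+1%:Z) || (m%:Z < j) -> kern m j = 0.
Proof. by move=> j_out; rewrite /kern qbinom_out ?mulr0 //; lia. Qed.

Lemma kernS m j :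
  kern m.+1 j = q ^+ (2 * m).+1 * kern m (j - 1) + (1 + q ^+ (4 * m + 4)) * kern m j
                + q ^+ (2 * m + 3) * kern m (j + 1).
Proof.
rewrite /kern (_ : (2 * m.+1).+1 = (2 * m).+3)%N; last by lia.
rewrite (qbinomSS sqr_nonroot sqr_neq0) -exprM [q ^+ 2]exprnP !exprz_exp.
rewrite (_ : m.+1%:Z - j - 1 = m%:Z - j); last by lia.
rewrite (_ : m.+1%:Z - j - 2 = m%:Z - (j + 1)); last by lia.
rewrite (_ : m.+1%:Z - j = m%:Z - (j - 1)); last by lia.
rewrite (_ : (2 * (2 * m).+2 = 4 * m + 4)%N); last by lia.
rewrite !mulrDr !mulrA !exprnP -!expfzDr //.
congr (q ^ _ * _ + _ + q ^ _ * _); [nia | ring | nia].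
Qed.

Definition kern_sum (m : nat) (w : int -> R) : R := zsum m.+1 (fun j => kern m j * w j).

Lemma kern_sum_widen m (G : int -> R) : zsum m.+2 (fun j => kern m j * G j) = kern_sum m G.
Proof. by rewrite zsumS !kern_out ?mul0r ?add0r ?addr0 //; lia. Qed.

Lemma kern_sum_shiftl m w :
  zsum m.+2 (fun j => kern m (j - 1) * w j) = kern_sum m (fun j => w (j + 1)).
Proof.
rewrite -kern_sum_widen -(zsum_shift_out (F := fun j => kern m (j - 1) * w j)).
- by apply: eq_zsum => j; rewrite addrK.
- by rewrite kern_out ?mul0r //; lia.
- by rewrite kern_out ?mul0r //; lia.
Qed.

Lemma kern_sum_shiftr m w :
  zsum m.+2 (fun j => kern m (j + 1) * w j) = kern_sum m (fun j => w (j - 1)).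
Proof.
rewrite -kern_sum_widen -(zsum_shift_out (F := fun j => kern m j * w (j - 1))).
- by apply: eq_zsum => j; rewrite addrK.
- by rewrite kern_out ?mul0r //; lia.
- by rewrite kern_out ?mul0r //; lia.
Qed.

Lemma kern_sumS m w :
  kern_sum m.+1 w = q ^+ (2 * m).+1 * kern_sum m (fun j => w (j + 1))
    + (1 + q ^+ (4 * m + 4)) * kern_sum m w + q ^+ (2 * m + 3) * kern_sum m (fun j => w (j - 1)).
Proof.
have kernS_w j : kern m.+1 j * w j = q ^+ (2 * m).+1 * (kern m (j - 1) * w j)
    + (1 + q ^+ (4 * m + 4)) * (kern m j * w j) + q ^+ (2 * m + 3) * (kern m (j + 1) * w j).
  by rewrite kernS; ring.
rewrite {1}/kern_sum (eq_zsum _ kernS_w) !zsumD -!mulr_zsumr.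
by rewrite kern_sum_widen kern_sum_shiftl kern_sum_shiftr.
Qed.

Lemma kern_sum0 w : kern_sum 0 w = q * w (-1) + w 0.
Proof.
rewrite /kern_sum zsumS zsum0 addr0 /kern mulrNN mulr1 mul0r sub0r opprK subrr.
by rewrite (qbinomnn sqr_nonroot 1) (qbinom0 sqr_nonroot) expr1z expr0z !mul1r mulr1.
Qed.

Lemma kern_sumB m u v : kern_sum m (fun j => u j - v j) = kern_sum m u - kern_sum m v.
Proof. by rewrite /kern_sum /zsum -sumrB; apply: eq_bigr => i _; rewrite mulrBr. Qed.

Definition trinom_prod (m : nat) : R := \prod_(i < m) (1 + q ^+ (2 * i).+1 + q ^+ (4 * i + 2)).

Lemma kern_sum_sleg3 m :
  kern_sum m (fun j => sleg3 (j - 1)) = trinom_prod m * (1 + q ^+ (2 * m).+1)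
  /\ kern_sum m sleg3 = trinom_prod m * q ^+ (2 * m).+1.
Proof.
elim: m => [|m [IHa IHb]].
  have sleg3_m1 : sleg3 (-1) = 1 by rewrite /sleg3 exprN1 invrN1 /leg3 /= mulrNN mulr1.
  have sleg3_m2 : sleg3 (-2) = 1.
    by rewrite /sleg3 /leg3 /= -[(-1 : R) ^ (-2)]/(((-1) ^+ 2)^-1) sqrrN expr1n invr1 mulr1.
  have sleg3_0 : sleg3 0 = 0 by rewrite /sleg3 /leg3 /= mulr0.
  rewrite !kern_sum0 /trinom_prod big_ord0 sub0r (_ : -1 - 1 = -2) //.
  by rewrite sleg3_m1 sleg3_m2 sleg3_0; split; ring.
have sleg3_recV j : sleg3 (j - 1) = sleg3 j - sleg3 (j + 1) by rewrite sleg3_rec; ring.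
have shift_b : kern_sum m (fun j => sleg3 (j + 1))
               = kern_sum m sleg3 - kern_sum m (fun j => sleg3 (j - 1)).
  by rewrite -kern_sumB; apply: eq_zsum => j; rewrite sleg3_rec.
have shift_a : kern_sum m (fun j => sleg3 (j - 1 - 1))
               = kern_sum m (fun j => sleg3 (j - 1)) - kern_sum m sleg3.
  by rewrite -kern_sumB; apply: eq_zsum => j; rewrite sleg3_recV subrK.
have unshift_a : kern_sum m (fun j => sleg3 (j + 1 - 1)) = kern_sum m sleg3.
  by apply: eq_zsum => j; rewrite addrK.
rewrite !kern_sumS shift_b shift_a unshift_a IHa IHb /trinom_prod big_ord_recr /= -/(trinom_prod m).
rewrite (_ : (2 * m.+1).+1 = (2 * m).+1 + 2)%N; last by lia.
rewrite (_ : (4 * m + 4 = ((2 * m).+1 + (2 * m).+1) + 2)%N); last by lia.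
rewrite (_ : (4 * m + 2 = (2 * m).+1 + (2 * m).+1)%N); last by lia.
rewrite (_ : (2 * m + 3 = (2 * m).+1 + 2)%N); last by lia.
by rewrite !exprD; split; ring.
Qed.

Lemma qpoch_odd_neq0 m : qpoch q (q ^+ 2) m != 0.
Proof.
apply/prodf_neq0 => i _; rewrite subr_eq0 eq_sym -exprM -exprS.
exact: q_nonroot.
Qed.

Lemma qpoch_cube m : qpoch (q ^+ 3) (q ^+ 6) m = qpoch q (q ^+ 2) m * trinom_prod m.
Proof.
rewrite /qpoch /trinom_prod -big_split; apply: eq_bigr => i _ /=.
have -> : q * (q ^+ 2) ^+ i = q ^+ (2 * i).+1 by rewrite -exprM -exprS.
rewrite -exprM -exprD (_ : (3 + 6 * i = (2 * i).+1 * 3)%N); last by lia.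
rewrite (_ : (4 * i + 2 = (2 * i).+1 * 2)%N); last by lia.
by rewrite !exprM; ring.
Qed.

Definition base_weight (j : int) : R := sleg3 j * q ^ (j * j - 1).

Definition base_beta (m : nat) : R :=
  t ^+ m * (qpoch (q ^+ 3) (q ^+ 6) m / qpoch q (q ^+ 2) m) / qfac t (2 * m).+1.

Lemma base_bailey_pair :
  bailey_pair t (fun r => base_weight r%:Z + base_weight (- r%:Z - 1)) base_beta.
Proof.
move=> L; rewrite (bailey_sum_zsum sqr_nonroot).
have -> : zsum L.+1 (fun j => base_weight j * qb (2 * L).+1 (L%:Z - j)) = q^-1 * kern_sum L sleg3.
  rewrite /kern_sum mulr_zsumr; apply: eq_zsum => j.
  by rewrite /base_weight /kern expfzDr // exprN1; ring.
rewrite (kern_sum_sleg3 L).2 /base_beta qpoch_cube [qpoch q t L * _]mulrC mulfK ?qpoch_odd_neq0 //.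
by rewrite -exprM [q ^+ (2 * L).+1]exprS; field; rewrite q_neq0 (qfac_neq0 sqr_nonroot).
Qed.

End BasePair.

(** * Unfolding the Bailey chain *)

Lemma ext_ord v K (f : {ffun 'I_v -> 'I_K.+1}) (i : 'I_v) : ext f i = f i.
Proof. by rewrite /ext valK. Qed.

Lemma ext_out v K (f : {ffun 'I_v -> 'I_K.+1}) k : (v <= k)%N -> ext f k = 0%N.
Proof. by move=> v_le_k; rewrite /ext insubN // -leqNgt. Qed.

Section ExtensionByZero.
Variables (v K : nat).

Definition nat_cons (x : nat) (n : nat -> nat) (k : nat) : nat :=
  if k is k'.+1 then n k' else x.

Definition ffun_cons (x : 'I_K.+1) (g : {ffun 'I_v -> 'I_K.+1}) : {ffun 'I_v.+1 -> 'I_K.+1} :=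
  [ffun i => if unlift ord0 i is Some j then g j else x].

Lemma ext_ffun_cons x g : ext (ffun_cons x g) = nat_cons x (ext g).
Proof.
apply: functional_extensionality => -[|k].
  by rewrite (ext_ord _ ord0) ffunE unlift_none.
have [k_lt_v | v_le_k] := ltnP k v; last by rewrite /= !ext_out.
rewrite /= -[ext g k]/(ext g (Ordinal k_lt_v)) -[k.+1]/(nat_of_ord (lift ord0 (Ordinal k_lt_v))).
by rewrite !ext_ord ffunE liftK.
Qed.

Lemma sum_ffun_cons (R : nmodType) (F : (nat -> nat) -> R) :
  \sum_(f : {ffun 'I_v.+1 -> 'I_K.+1}) F (ext f)
  = \sum_(x < K.+1) \sum_(g : {ffun 'I_v -> 'I_K.+1}) F (nat_cons x (ext g)).
Proof.
rewrite pair_bigA (reindex (fun xg => ffun_cons xg.1 xg.2)) /=.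
  by apply: eq_bigr => -[x g] _; rewrite ext_ffun_cons.
exists (fun f => (f ord0, [ffun j => f (lift ord0 j)])) => [[x g] _ | f _] /=.
  by rewrite ffunE unlift_none; congr (_, _); apply/ffunP => j; rewrite !ffunE liftK.
by apply/ffunP => i; rewrite ffunE; case: unliftP => [j ->|->]; rewrite ?ffunE.
Qed.

End ExtensionByZero.

Section MultipleSum.
Variables (R : fieldType) (t : R) (be : nat -> R).

Definition chain_term (v : nat) (n : nat -> nat) (M : nat) : R :=
  t ^+ (\sum_(i < v) Nsum v n i * (Nsum v n i).+1) * \prod_(i < v.-1) (qfac t (n i))^-1
  * be (n v.-1) * inv_qfac t (M%:Z - (Nsum v n 0)%:Z).

Lemma inv_qfac_neg z : z < 0 -> inv_qfac t z = 0.
Proof. by case: z. Qed.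

Lemma Nsum_consS v x n i : Nsum v.+1 (nat_cons x n) i.+1 = Nsum v n i.
Proof. by rewrite /Nsum big_add1. Qed.

Lemma Nsum_cons0 v x n : Nsum v.+1 (nat_cons x n) 0 = (x + Nsum v n 0)%N.
Proof. by rewrite /Nsum big_nat_recl // big_add1. Qed.

Lemma chain_term1 x n M :
  chain_term 1 (nat_cons x n) M = t ^+ (x * x.+1) * inv_qfac t (M%:Z - x%:Z) * be x.
Proof. by rewrite /chain_term big_ord1 big_ord0 /Nsum big_nat1 mulr1 mulrAC. Qed.

Lemma chain_term_cons v x n M : (0 < v)%N ->
  chain_term v.+1 (nat_cons x n) M
  = t ^+ ((x + Nsum v n 0) * (x + Nsum v n 0).+1) * inv_qfac t (M%:Z - (x + Nsum v n 0)%N%:Z)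
    * chain_term v n (x + Nsum v n 0).
Proof.
case: v => [//|v] _.
rewrite /chain_term big_ord_recl Nsum_cons0 exprD [\prod_(i < v.+1) _]big_ord_recl /=.
under eq_bigr => i _ do rewrite Nsum_consS.
rewrite (_ : (x + Nsum v.+1 n 0)%N%:Z - (Nsum v.+1 n 0)%:Z = x%:Z); last by lia.
by rewrite /=; ring.
Qed.

Lemma chain_term_out v n M : (M < Nsum v n 0)%N -> chain_term v n M = 0.
Proof. by move=> M_lt; rewrite /chain_term inv_qfac_neg ?mulr0 //; lia. Qed.

Lemma bailey_step_window (F : nat -> R) a M K :
  (forall m, (m < a)%N -> F m = 0) -> (M <= K)%N ->
  \sum_(x < K.+1) t ^+ ((x + a) * (x + a).+1) * inv_qfac t (M%:Z - (x + a)%N%:Z) * F (x + a)%N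
  = bailey_step t F M.
Proof.
move=> F_low M_le_K.
rewrite (sum_window (G := fun m => t ^+ (m * m.+1) * inv_qfac t (M%:Z - m%:Z) * F m) (M := M)) //.
- apply: eq_big_nat => m /andP[_ m_le_M].
  by rewrite (_ : M%:Z - m%:Z = (M - m)%N%:Z) /= ?mulnSr; [ring | lia].
- by move=> m /F_low ->; rewrite mulr0.
- by move=> m M_lt_m; rewrite inv_qfac_neg ?mulr0 ?mul0r //; lia.
Qed.

Lemma sum_chain_term v K M : (0 < v)%N -> (M <= K)%N ->
  \sum_(f : {ffun 'I_v -> 'I_K.+1}) chain_term v (ext f) M = iter v (bailey_step t) be M.
Proof.
case: v => [//|v] _; elim: v M => [|v IH] M M_le_K.
  rewrite (@sum_ffun_cons 0 K _ (fun n => chain_term 1 n M)) /=.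
  rewrite -(@bailey_step_window be 0 M K _ M_le_K) //.
  apply: eq_bigr => x _; rewrite addn0 (eq_bigr _ (fun g _ => chain_term1 x (ext g) M)).
  by rewrite sumr_const card_ffun !card_ord expn0 mulr1n.
rewrite (@sum_ffun_cons v.+1 K _ (fun n => chain_term v.+2 n M)).
under eq_bigr => x _ do under eq_bigr => g _ do rewrite chain_term_cons //.
rewrite exchange_big iterS.
under eq_bigr => g _ do rewrite (bailey_step_window (@chain_term_out v.+1 (ext g)) M_le_K).
rewrite /bailey_step exchange_big; apply: eq_big_nat => m /andP[_ m_le_M].
rewrite -IH; last by rewrite (leq_trans _ M_le_K) // -ltnS.
by rewrite mulr_sumr mulr_suml; apply: eq_bigr => g _.
Qed.

End MultipleSum.

Section BothSides.
Variables (R : fieldType) (q : R).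

Local Notation t := (q ^+ 2).

Lemma lhs_term_chain v L n :
  lhs_term q v L n = qfac t (2 * L).+1 * chain_term t (base_beta q) v n L.
Proof. by rewrite /lhs_term /chain_term /base_beta prodfV exprD !addn1 invfM; ring. Qed.

Definition chain_weight (v : nat) (j : int) : R := q ^ ((2 * v)%:Z * (j * j + j)) * base_weight q j.

Lemma chain_weight_fold v (r : nat) :
  chain_weight v r%:Z + chain_weight v (- r%:Z - 1)
  = t ^+ ((r * r + r) * v) * (base_weight q r%:Z + base_weight q (- r%:Z - 1)).
Proof.
rewrite /chain_weight.
rewrite (_ : (- r%:Z - 1) * (- r%:Z - 1) + (- r%:Z - 1) = r%:Z * r%:Z + r%:Z); last by ring.
rewrite (_ : (2 * v)%:Z * (r%:Z * r%:Z + r%:Z) = (2 * ((r * r + r) * v))%N%:Z); last by lia.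
by rewrite -exprnP exprM mulrDr.
Qed.

Hypothesis q_neq0 : q != 0.

Lemma rhs_term_chain_weight v L j :
  rhs_term q v L j = chain_weight v j * qbinom t (2 * L).+1%:Z (L%:Z - j).
Proof.
rewrite /rhs_term /chain_weight /base_weight /sleg3.
rewrite (_ : (2 * v + 1)%:Z * j ^+ 2 + (2 * v)%:Z * j - 1 = (2 * v)%:Z * (j * j + j) + (j * j - 1)).
  by rewrite expfzDr // addn1; ring.
by rewrite PoszD PoszM expr2; ring.
Qed.

Lemma sum_rhs_term v L :
  \sum_(0 <= k < 2 * L + 3) rhs_term q v L (k%:Z - (L + 1)%:Z)
  = zsum L.+1 (fun j => chain_weight v j * qbinom t (2 * L).+1%:Z (L%:Z - j)).
Proof.
rewrite big_mkord (_ : (2 * L + 3 = (L.+1).*2.+1)%N); last by lia.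
rewrite big_ord_recr /= [rhs_term _ _ _ _]rhs_term_chain_weight.
rewrite qbinom_out ?mulr0 ?addr0; last by lia.
by apply: eq_bigr => k _; rewrite rhs_term_chain_weight addn1.
Qed.

End BothSides.

Theorem mainTheorem17 (R : fieldType) (q : R) (v L : nat) :
  q != 0 -> (forall k : nat, (0 < k)%N -> q ^+ k != 1) -> (1 <= v)%N ->
  \sum_(f : {ffun 'I_v -> 'I_L.+1}) lhs_term q v L (ext f)
  = \sum_(0 <= k < 2 * L + 3) rhs_term q v L (k%:Z - (L + 1)%:Z).
Proof.
move=> q_neq0 q_nonroot v_gt0.
have t_nonroot := sqr_nonroot q_nonroot.
rewrite (eq_bigr _ (fun f _ => lhs_term_chain q v L (ext f))) -mulr_sumr sum_chain_term //.
rewrite (bailey_chain t_nonroot v (base_bailey_pair q_neq0 q_nonroot)) sum_rhs_term //.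
under eq_bigr => r _ do rewrite -chain_weight_fold.
by rewrite bailey_sum_zsum // mulrC divfK // qfac_neq0.
Qed.
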